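(* Let $\mathcal{H}$ be a complex Hilbert space and $T, S\in \mathcal{C}_2(\mathcal{H})$. Then: (i) $\big\|TT^* + T^*T\big\|_2 + \sup_{\varphi \in \mathbb{R}}\Big|{\rm tr}\big((e^{i\varphi}T)^2 + (e^{-i\varphi}T^* )^2\big)\Big| \leq 2\big(\|T\|^2_2 + |{\rm tr}(T^2)|\big)$; (ii) $\|TS\|^2_2 + \big|{\rm tr}\big((TS)^2\big)\big| \leq 4\min\Big\{\|T\|^2_2\big(\|S\|^2_2 + |{\rm tr}(S^2)|\big),\ \|S\|^2_2\big(\|T\|^2_2 + |{\rm tr}(T^2)|\big)\Big\}$.
   Context: $\mathcal{C}_2(\mathcal{H})$ denotes the class of Hilbert--Schmidt operators on $\mathcal{H}$, i.e. bounded operators $T$ with $\sum_i\|Te_i\|^2<\infty$ for an orthonormal basis $\{e_i\}$, with Hilbert--Schmidt norm $\|T\|_2=\big(\sum_i\|Te_i\|^2\big)^{1/2}$; ${\rm tr}$ denotes the trace. *)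

From HB Require Import structures.
From mathcomp Require Import all_boot all_order all_algebra.
From mathcomp Require Import all_classical all_reals.
From mathcomp Require Import ereal esum trigo.
From mathcomp Require Import complex.
Set Implicit Arguments. Unset Strict Implicit. Unset Printing Implicit Defensive.
Import Order.TTheory GRing.Theory Num.Theory.
Local Open Scope ring_scope.
Local Open Scope classical_set_scope.

Section HilbertSchmidt.
Variable R : realType.
Local Notation C := (R[i]).
Variable H : lmodType C.
Variable ip : H -> H -> C.   (* inner product, linear in the first argument *)

Definition cmod (z : C) : R := ComplexField.Normc.normc z.

Definition hnorm (x : H) : R := Num.sqrt (complex.Re (ip x x)).

Definition is_hilbert : Prop :=
  [/\ (forall a x y z, ip (a *: x + y) z = a * ip x z + ip y z),
      (forall x y, ip y x = conjc (ip x y)),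
      (forall x, complex.Im (ip x x) = 0 /\ 0 <= complex.Re (ip x x)),
      (forall x, ip x x = 0 -> x = 0) &
      (forall u : nat -> H,
         (forall eps : R, 0 < eps -> exists N : nat, forall m n : nat,
             (N <= m)%N -> (N <= n)%N -> hnorm (u m - u n) < eps) ->
         exists x : H, forall eps : R, 0 < eps -> exists N : nat,
             forall n : nat, (N <= n)%N -> hnorm (u n - x) < eps)].

Definition bounded_linear (T : H -> H) : Prop :=
  (forall (a : C) x y, T (a *: x + y) = a *: T x + T y) /\
  exists M : R, forall x, hnorm (T x) <= M * hnorm x.

Definition adjoint_of (T Ts : H -> H) : Prop :=
  forall x y, ip (T x) y = ip x (Ts y).

Definition orthonormal_basis (I : choiceType) (e : I -> H) : Prop :=
  (forall i j, ip (e i) (e j) = (if `[< i = j >] then 1 else 0)) /\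
  (forall x, (forall i, ip x (e i) = 0) -> x = 0).

Definition hs_sum2 (I : choiceType) (e : I -> H) (T : H -> H) : \bar R :=
  \esum_(i in [set: I]) ((hnorm (T (e i))) ^+ 2)%:E.

Definition is_HS (I : choiceType) (e : I -> H) (T : H -> H) : Prop :=
  (hs_sum2 e T < +oo)%E.

Definition hs_norm (I : choiceType) (e : I -> H) (T : H -> H) : R :=
  Num.sqrt (fine (hs_sum2 e T)).

(* unordered sum of a (absolutely summable) real family: positive part minus negative part *)
Definition rsum (I : choiceType) (f : I -> R) : R :=
  fine (\esum_(i in [set: I]) (Num.max (f i) 0)%:E) -
  fine (\esum_(i in [set: I]) (Num.max (- f i) 0)%:E).

Definition csum (I : choiceType) (f : I -> C) : C :=
  Complex (rsum (fun i => complex.Re (f i))) (rsum (fun i => complex.Im (f i))).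

Definition trace (I : choiceType) (e : I -> H) (A : H -> H) : C :=
  csum (fun i => ip (A (e i)) (e i)).

End HilbertSchmidt.

Definition expi (R : realType) (phi : R) : R[i] := Complex (cos phi) (sin phi).

(* Both inequalities follow from four cruder estimates:
     ||T T^* + T^* T||_2 <= 2 ||T||_2^2,
     |tr((e^{i phi} T)^2 + (e^{-i phi} T^* )^2)| = |2 Re (e^{2 i phi} tr T^2)| <= 2 |tr T^2|,
     ||T S||_2^2 <= ||T||_2^2 ||S||_2^2,
     |tr((T S)^2)| <= ||S T S||_2 ||T^*||_2 <= ||T||_2^2 ||S||_2^2,
   the last one because tr(T (S T S)) = sum_i <S T S e_i, T^* e_i>.  In (ii) the left-hand
   side is thus at most 2 ||T||_2^2 ||S||_2^2, which is below either term of the minimum.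
   These estimates rest on ||A x|| <= ||A||_2 ||x||, ||A B||_2 <= ||A||_2 ||B||_2 and
   ||A^*||_2 = ||A||_2, all consequences of Parseval's identity for the basis.  Completeness
   of H is used only there: the partial Fourier sums of x along an increasing exhaustion of
   the index set form a Cauchy sequence, whose limit differs from x by a vector orthogonal
   to every basis vector, hence is x. *)

From Pilot Require Import Defs.
From HB Require Import structures.
From mathcomp Require Import all_boot all_order all_algebra.
From mathcomp Require Import all_classical all_reals.
From mathcomp Require Import ereal esum numfun trigo complex.
From mathcomp Require Import ring lra.
Import Order.TTheory GRing.Theory Num.Theory.
Local Open Scope ring_scope.
Local Open Scope classical_set_scope.

Set Implicit Arguments.
Unset Strict Implicit.
Unset Printing Implicit Defensive.

Section ComplexModulus.
Variable R : realType.
Implicit Types (r : R) (z w : R[i]).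

Lemma cmodE z : cmod z = Num.sqrt (complex.Re z ^+ 2 + complex.Im z ^+ 2).
Proof. by case: z. Qed.

Lemma cmod_ge0 z : 0 <= cmod z.
Proof. by rewrite cmodE sqrtr_ge0. Qed.

Lemma cmodM z w : cmod (z * w) = cmod z * cmod w.
Proof. exact: ComplexField.Normc.normcM. Qed.

Lemma cmodD z w : cmod (z + w) <= cmod z + cmod w.
Proof. exact: le_normcD. Qed.

Lemma cmod_eq0 z : cmod z = 0 -> z = 0.
Proof. exact: ComplexField.Normc.eq0_normc. Qed.

Lemma cmodJ z : cmod (conjc z) = cmod z.
Proof. by case: z => a b; rewrite !cmodE /= sqrrN. Qed.

Lemma cmodRE r : cmod r%:C%C = `|r|.
Proof. by rewrite cmodE /= expr0n addr0 sqrtr_sqr. Qed.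

Lemma mulcJ z : z * conjc z = (cmod z ^+ 2)%:C%C.
Proof.
rewrite cmodE sqr_sqrtr ?addr_ge0 ?sqr_ge0 //; case: z => a b.
by apply/eqP; rewrite eq_complex /=; apply/andP; split; apply/eqP; ring.
Qed.

Lemma normRe_le_cmod z : `|complex.Re z| <= cmod z.
Proof. by rewrite cmodE -sqrtr_sqr ler_wsqrtr // lerDl sqr_ge0. Qed.

Lemma normIm_le_cmod z : `|complex.Im z| <= cmod z.
Proof. by rewrite cmodE -sqrtr_sqr ler_wsqrtr // lerDr sqr_ge0. Qed.

Lemma Re_le_cmod z : complex.Re z <= cmod z.
Proof. exact: le_trans (ler_norm _) (normRe_le_cmod z). Qed.

Lemma cmod_addcJ_le z : cmod (z + conjc z) <= 2 * cmod z.
Proof.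
rewrite addcJ -(rmorph_nat (real_complex R)) -rmorphM cmodRE normrM ger0_norm //.
by rewrite ler_wpM2l // normRe_le_cmod.
Qed.

Lemma cmod_expi r : cmod (expi r) = 1.
Proof. by rewrite cmodE /= cos2Dsin2 sqrtr1. Qed.

Lemma expiN r : expi (- r) = conjc (expi r).
Proof. by rewrite /expi cosN sinN. Qed.

Lemma polar_unit z : exists2 w, cmod w = 1 & w * z = (cmod z)%:C%C.
Proof.
have [->|z0] := eqVneq z 0.
  by exists 1; rewrite ?mulr0 cmodE /= ?expr1n expr0n addr0 ?sqrtr1 ?sqrtr0.
have c0 : cmod z != 0 by apply: contra_neq z0; apply: cmod_eq0.
exists (conjc z * ((cmod z)^-1)%:C%C).
  by rewrite cmodM cmodJ cmodRE normfV ger0_norm ?cmod_ge0 ?divff.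
by rewrite mulrAC [conjc z * z]mulrC mulcJ -rmorphM expr2 mulrK ?unitfE.
Qed.

End ComplexModulus.

Lemma ler_of_sqr (R : realDomainType) (a b : R) : 0 <= b -> a ^+ 2 <= b ^+ 2 -> a <= b.
Proof. by move=> b0 h; have [//|ba] := leP a b; nra. Qed.

Section CauchySchwarzSum.
Variables (R : rcfType) (J : Type) (s : seq J) (f g : J -> R).

Lemma sum_mul_le_sqrt :
  \sum_(i <- s) f i * g i <=
  Num.sqrt (\sum_(i <- s) f i ^+ 2) * Num.sqrt (\sum_(i <- s) g i ^+ 2).
Proof.
set A := \sum_(i <- s) f i ^+ 2; set B := \sum_(i <- s) g i ^+ 2.
set P := \sum_(i <- s) f i * g i.
have A0 : 0 <= A by rewrite sumr_ge0 // => i _; rewrite sqr_ge0.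
have B0 : 0 <= B by rewrite sumr_ge0 // => i _; rewrite sqr_ge0.
have sum_lin (F G K : J -> R) (x y z : R) :
    \sum_(i <- s) (F i * x + G i * y - K i * z) =
    (\sum_(i <- s) F i) * x + (\sum_(i <- s) G i) * y - (\sum_(i <- s) K i) * z.
  by rewrite big_split big_split /= sumrN -!mulr_suml.
have lagrange : 2 * (A * B - P ^+ 2) =
    \sum_(i <- s) \sum_(j <- s) (f i * g j - f j * g i) ^+ 2.
  transitivity (\sum_(i <- s) (f i ^+ 2 * B + g i ^+ 2 * A - (f i * g i) * (2 * P))).
    by rewrite sum_lin -/A -/B -/P; ring.
  apply: eq_bigr => i _.
  transitivity (\sum_(j <- s) (g j ^+ 2 * f i ^+ 2 + f j ^+ 2 * g i ^+ 2
                               - (f j * g j) * (2 * (f i * g i)))).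
    by rewrite sum_lin -/A -/B -/P; ring.
  by apply: eq_bigr => j _; ring.
have : 0 <= 2 * (A * B - P ^+ 2).
  by rewrite lagrange; do 2 apply: sumr_ge0 => ? _; apply: sqr_ge0.
move=> h; apply: ler_of_sqr; first by rewrite mulr_ge0 ?sqrtr_ge0.
by rewrite exprMn !sqr_sqrtr //; nra.
Qed.

Lemma sum_sqrD_le :
  \sum_(i <- s) (f i + g i) ^+ 2 <=
  (Num.sqrt (\sum_(i <- s) f i ^+ 2) + Num.sqrt (\sum_(i <- s) g i ^+ 2)) ^+ 2.
Proof.
have A0 : 0 <= \sum_(i <- s) f i ^+ 2 by rewrite sumr_ge0 // => i _; rewrite sqr_ge0.
have B0 : 0 <= \sum_(i <- s) g i ^+ 2 by rewrite sumr_ge0 // => i _; rewrite sqr_ge0.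
under eq_bigr do rewrite sqrrD.
rewrite sqrrD !sqr_sqrtr // !big_split /= lerD2r lerD2l mulr2n.
by rewrite lerD // sum_mul_le_sqrt.
Qed.

End CauchySchwarzSum.

Section InnerProduct.
Variables (R : realType) (H : lmodType R[i]) (ip : H -> H -> R[i]).
Hypothesis hH : is_hilbert ip.
Local Notation hnorm := (hnorm ip).
Implicit Types (a : R[i]) (x y z : H).

Lemma ipDZl a x y z : ip (a *: x + y) z = a * ip x z + ip y z.
Proof. by case: hH. Qed.

Lemma ipC x y : ip y x = conjc (ip x y).
Proof. by case: hH. Qed.

Lemma ip0l z : ip 0 z = 0.
Proof.
have := ipDZl 1 0 0 z; rewrite scaler0 addr0 mul1r => h.
by apply: (@addrI _ (ip 0 z)); rewrite addr0 -h.
Qed.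

Lemma ipDl x y z : ip (x + y) z = ip x z + ip y z.
Proof. by rewrite -[x]scale1r ipDZl mul1r scale1r. Qed.

Lemma ipZl a x z : ip (a *: x) z = a * ip x z.
Proof. by rewrite -[a *: x]addr0 ipDZl ip0l addr0. Qed.

Lemma ipNl x z : ip (- x) z = - ip x z.
Proof. by rewrite -scaleN1r ipZl mulN1r. Qed.

Lemma ipBl x y z : ip (x - y) z = ip x z - ip y z.
Proof. by rewrite ipDl ipNl. Qed.

Lemma ipDr x y z : ip z (x + y) = ip z x + ip z y.
Proof. by rewrite ipC ipDl rmorphD /= -!ipC. Qed.

Lemma ipZr a x z : ip z (a *: x) = conjc a * ip z x.
Proof. by rewrite ipC ipZl rmorphM /= -ipC. Qed.

Lemma ip0r z : ip z 0 = 0.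
Proof. by rewrite ipC ip0l rmorph0. Qed.

Lemma ipBr x y z : ip z (x - y) = ip z x - ip z y.
Proof. by rewrite ipC ipBl rmorphB /= -!ipC. Qed.

Lemma ip_suml (J : Type) (s : seq J) (f : J -> H) z :
  ip (\sum_(j <- s) f j) z = \sum_(j <- s) ip (f j) z.
Proof. exact: (big_morph (ip^~ z) (fun x y => ipDl x y z) (ip0l z)). Qed.

Lemma ip_sumr (J : Type) (s : seq J) (f : J -> H) z :
  ip z (\sum_(j <- s) f j) = \sum_(j <- s) ip z (f j).
Proof. exact: (big_morph (ip z) (fun x y => ipDr x y z) (ip0r z)). Qed.

Lemma hnorm_ge0 x : 0 <= hnorm x.
Proof. exact: sqrtr_ge0. Qed.

Lemma ip_self x : ip x x = (hnorm x ^+ 2)%:C%C.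
Proof.
have [Im0 Re0] : complex.Im (ip x x) = 0 /\ 0 <= complex.Re (ip x x) by case: hH.
by rewrite /hnorm sqr_sqrtr //; move: Im0; case: (ip x x) => ? ? /= ->.
Qed.

Lemma hnorm_sqr x : hnorm x ^+ 2 = complex.Re (ip x x).
Proof. by rewrite ip_self. Qed.

Lemma hnorm_eq0 x : hnorm x = 0 -> x = 0.
Proof.
case: hH => _ _ _ ip_eq0 _ hx0; apply: ip_eq0.
by rewrite ip_self hx0 expr0n.
Qed.

Lemma hnormE x r : 0 <= r -> ip x x = (r ^+ 2)%:C%C -> hnorm x = r.
Proof. by move=> r0 h; rewrite /hnorm h /= sqrtr_sqr ger0_norm. Qed.

Lemma hnormZ a x : hnorm (a *: x) = cmod a * hnorm x.
Proof.
apply: hnormE; first by rewrite mulr_ge0 ?cmod_ge0 ?hnorm_ge0.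
by rewrite ipZl ipZr mulrA mulcJ ip_self -rmorphM exprMn.
Qed.

Lemma hnorm_opp x : hnorm (- x) = hnorm x.
Proof.
by rewrite -scaleN1r hnormZ -(rmorphN1 (real_complex R)) cmodRE normrN1 mul1r.
Qed.

Lemma hnorm_distC x y : hnorm (x - y) = hnorm (y - x).
Proof. by rewrite -opprB hnorm_opp. Qed.

Lemma cmod_ip_le x y : cmod (ip x y) <= hnorm x * hnorm y.
Proof.
apply: ler_of_sqr; first by rewrite mulr_ge0 ?hnorm_ge0.
have [y0|ny0] := eqVneq (hnorm y) 0.
  by rewrite (hnorm_eq0 y0) ip0r cmodRE normr0 expr0n sqr_ge0.
set r := hnorm y ^+ 2; set c := ip x y.
have r0 : 0 < r by rewrite exprn_gt0 // lt_def ny0 hnorm_ge0.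
(* the component of [r x] orthogonal to [y] *)
pose v := r%:C%C *: x - c *: y.
have yv0 : ip y v = 0.
  by rewrite ipBr !ipZr ip_self (ipC x y) /= oppr0 mulrC subrr.
have : 0 <= complex.Re (ip v v) by rewrite -hnorm_sqr sqr_ge0.
rewrite {1}/v ipBl !ipZl yv0 mulr0 subr0 ipBr !ipZr ip_self -/r -/c.
rewrite -[conjc c * c]mulrC mulcJ /= exprMn -/r.
by move: (hnorm x ^+ 2) (cmod c ^+ 2) => p q h; nra.
Qed.

Lemma ler_hnormD x y : hnorm (x + y) <= hnorm x + hnorm y.
Proof.
apply: ler_of_sqr; first by rewrite addr_ge0 ?hnorm_ge0.
rewrite hnorm_sqr ipDl !ipDr (ipC x y) !ip_self.
have := Re_le_cmod (ip x y); have := cmod_ip_le x y.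
case: (ip x y) => a b /= h1 h2; nra.
Qed.

Lemma hnorm_sum (J : Type) (s : seq J) (f : J -> H) :
  hnorm (\sum_(j <- s) f j) <= \sum_(j <- s) hnorm (f j).
Proof.
elim: s => [|j s IH]; first by rewrite !big_nil /hnorm ip0l /= sqrtr0.
by rewrite !big_cons (le_trans (ler_hnormD _ _)) // lerD2l.
Qed.

Lemma hnormD_orth x y : ip x y = 0 -> hnorm (x + y) ^+ 2 = hnorm x ^+ 2 + hnorm y ^+ 2.
Proof.
move=> xy0; rewrite hnorm_sqr ipDl !ipDr (ipC x y) xy0 !ip_self /=.
by rewrite !addr0 add0r.
Qed.

End InnerProduct.

Section RealFamilies.
Variables (R : realType) (I : choiceType).
Implicit Types (f g : I -> R) (s t : seq I) (A B S : R).

Lemma sum_subset_le f s t : (forall i, 0 <= f i) -> uniq s -> uniq t ->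
  {subset s <= t} -> \sum_(i <- s) f i <= \sum_(i <- t) f i.
Proof.
move=> f0 us ut st.
rewrite [leRHS](bigID (mem s)) /= -[\sum_(i <- t | i \in s) _]big_filter.
have -> : \sum_(i <- [seq i <- t | i \in s]) f i = \sum_(i <- s) f i.
  apply/perm_big/uniq_perm => //; first exact: filter_uniq.
  by move=> i; rewrite mem_filter andb_idr //; apply: st.
by rewrite lerDl sumr_ge0.
Qed.

Definition esumR f : \bar R := \esum_(i in [set: I]) (f i)%:E.

Lemma esumR_ge_sum f s : uniq s -> ((\sum_(i <- s) f i)%:E <= esumR f)%E.
Proof.
move=> us; apply: esum_ge; exists [set` s]; first by split => //; apply: finite_seq.
by rewrite -fsbig_seq // sumEFin.
Qed.

Lemma sum_le_esumR f s B : uniq s -> (esumR f <= B%:E)%E -> \sum_(i <- s) f i <= B.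
Proof. by move=> us fB; rewrite -lee_fin (le_trans _ fB) ?esumR_ge_sum. Qed.

Lemma esumR_le f B : (forall s, uniq s -> \sum_(i <- s) f i <= B) ->
  (esumR f <= B%:E)%E.
Proof.
move=> fB; apply: ge_ereal_sup => _ [X [finX _] <-].
by rewrite fsbig_finite // sumEFin lee_fin fB // finmap.fset_uniq.
Qed.

Lemma esumR_gt_sum f S eps : esumR f = S%:E -> 0 < eps ->
  exists2 s, uniq s & S - eps < \sum_(i <- s) f i.
Proof.
move=> fS eps0; have : ((S - eps)%:E < esumR f)%E by rewrite fS lte_fin gtrBl.
move=> /ereal_sup_gt [_ [X [finX _] <-]]; rewrite fsbig_finite // sumEFin lte_fin.
by exists (finmap.enum_fset (fset_set X)) => //; apply: finmap.fset_uniq.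
Qed.

Lemma esumR_ge0 f : (forall i, 0 <= f i) -> (0 <= esumR f)%E.
Proof. by move=> f0; apply: esum_ge0 => i _; rewrite lee_fin. Qed.

Lemma le_esumR f g : (forall i, f i <= g i) -> (esumR f <= esumR g)%E.
Proof. by move=> fg; apply: le_esum => i _; rewrite lee_fin. Qed.

Lemma esumRD f g : (forall i, 0 <= f i) -> (forall i, 0 <= g i) ->
  esumR (fun i => f i + g i) = (esumR f + esumR g)%E.
Proof. by move=> f0 g0; rewrite -esumD // => i _; rewrite lee_fin. Qed.

Lemma esumRZ A f : 0 <= A -> esumR (fun i => A * f i) = (A%:E * esumR f)%E.
Proof.
move=> A0; rewrite /esumR /esum -ereal_supZl //; last first.
  by apply/set0P; exists 0%E, set0; [apply: fsets_set0 | rewrite fsbig_set0].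
have sumZ X : finite_set X ->
    (\sum_(i \in X) (A * f i)%:E = A%:E * \sum_(i \in X) (f i)%:E)%E.
  by move=> finX; rewrite !fsbig_finite // !sumEFin -EFinM mulr_sumr.
congr ereal_sup; apply/seteqP; split => y.
  move=> [X [finX _] <-]; exists (\sum_(i \in X) (f i)%:E)%E; first by exists X.
  by rewrite sumZ.
by move=> [z [X [finX _] <-] <-]; exists X; rewrite ?sumZ.
Qed.

Lemma esumR_finE f : (forall i, 0 <= f i) -> (esumR f < +oo)%E ->
  esumR f = (fine (esumR f))%:E.
Proof. by move=> f0 ffin; rewrite fineK // ge0_fin_numE // esumR_ge0. Qed.

Lemma esumR_mul_le f g A B : (forall i, 0 <= f i) -> (forall i, 0 <= g i) ->
  (esumR (fun i => (f i ^+ 2)%R) <= A%:E)%E ->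
  (esumR (fun i => (g i ^+ 2)%R) <= B%:E)%E ->
  (esumR (fun i => (f i * g i)%R) <= (Num.sqrt A * Num.sqrt B)%:E)%E.
Proof.
move=> f0 g0 fA gB; apply: esumR_le => s us.
by apply: le_trans (sum_mul_le_sqrt _ _ _) _; rewrite ler_pM ?sqrtr_ge0 //
  ler_wsqrtr // sum_le_esumR.
Qed.

Lemma esumR_sqrD_le f g A B :
  (esumR (fun i => (f i ^+ 2)%R) <= A%:E)%E ->
  (esumR (fun i => (g i ^+ 2)%R) <= B%:E)%E ->
  (esumR (fun i => ((f i + g i) ^+ 2)%R) <= ((Num.sqrt A + Num.sqrt B) ^+ 2)%:E)%E.
Proof.
move=> fA gB; apply: esumR_le => s us.
apply: le_trans (sum_sqrD_le _ _ _) _; rewrite lerXn2r ?nnegrE ?addr_ge0 ?sqrtr_ge0 //.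
by rewrite lerD // ler_wsqrtr // sum_le_esumR.
Qed.

Lemma esumR_exhaustion f S : (forall i, 0 <= f i) -> esumR f = S%:E ->
  exists F : nat -> seq I, [/\ forall n, uniq (F n),
    forall n m, (n <= m)%N -> {subset F n <= F m} &
    forall n, S - n.+1%:R^-1 < \sum_(i <- F n) f i].
Proof.
move=> f0 fS.
have /choice[G HG] n : exists s, uniq s /\ S - n.+1%:R^-1 < \sum_(i <- s) f i.
  have n0 : 0 < n.+1%:R^-1 :> R by rewrite invr_gt0 ltr0Sn.
  by have [s] := esumR_gt_sum fS n0; exists s.
pose F n := undup (flatten [seq G k | k <- iota 0 n.+1]).
have memF n i : (i \in F n) = [exists k : 'I_n.+1, i \in G k].
  rewrite mem_undup; apply/flatten_mapP/existsP => [[k]|[k kin]].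
    by rewrite mem_iota add0n => /andP[_ kn] ik; exists (Ordinal kn).
  by exists (nat_of_ord k) => //; rewrite mem_iota add0n ltn_ord.
have Fmono n m : (n <= m)%N -> {subset F n <= F m}.
  move=> nm i; rewrite !memF => /existsP[k ik]; apply/existsP.
  by exists (widen_ord (leq_ltn_trans nm (ltnSn m)) k).
exists F; split=> [n|//|n]; first exact: undup_uniq.
have [uG /lt_le_trans] := HG n; apply; apply: sum_subset_le => // [|i Gi].
  exact: undup_uniq.
by rewrite memF; apply/existsP; exists ord_max.
Qed.

Lemma esum_swap (u : I -> I -> \bar R) : (forall i j, (0 <= u i j)%E) ->
  (\esum_(i in [set: I]) \esum_(j in [set: I]) u i j =
   \esum_(j in [set: I]) \esum_(i in [set: I]) u i j)%E.
Proof.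
move=> u0; rewrite !(esum_esum (J := fun _ => [set: I])) //.
have -> : [set: I] `*`` (fun _ => [set: I]) = [set: I * I] by apply/seteqP; split.
have swap_bij : set_bij [set: I * I] [set: I * I] (fun k : I * I => (k.2, k.1)).
  by rewrite setTT_bijective; exists (fun k : I * I => (k.2, k.1)); case.
by rewrite (reindex_esum _ _ _ (fun k : I * I => u k.1 k.2) swap_bij).
Qed.

Definition abs_summable f := (esumR (fun i => `|f i|%R) < +oo)%E.

Lemma abs_summable_pos f : abs_summable f -> (esumR (f^\+)%R < +oo)%E.
Proof.
apply: le_lt_trans; apply: le_esumR => i.
by rewrite /funrpos ge_max ler_norm normr_ge0.
Qed.

Lemma abs_summable_neg f : abs_summable f -> (esumR (f^\-)%R < +oo)%E.
Proof.
apply: le_lt_trans; apply: le_esumR => i.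
by rewrite /funrneg ge_max -normrN ler_norm normr_ge0.
Qed.

Lemma abs_summableZ A f : abs_summable f -> abs_summable (fun i => A * f i).
Proof.
move=> fs; rewrite /abs_summable; under eq_fun do rewrite normrM.
by rewrite esumRZ // (esumR_finE _ fs) // -EFinM ltry.
Qed.

Lemma rsumE f : rsum f = fine (esumR f^\+) - fine (esumR f^\-).
Proof. by []. Qed.

Lemma rsum_sub f g : (forall i, 0 <= f i) -> (forall i, 0 <= g i) ->
  (esumR f < +oo)%E -> (esumR g < +oo)%E ->
  rsum (fun i => f i - g i) = fine (esumR f) - fine (esumR g).
Proof.
move=> f0 g0 ffin gfin; set h := fun i => f i - g i.
have hpos i : h^\+ i <= f i by rewrite ge_max f0 gerBl g0.
have hneg i : h^\- i <= g i by rewrite ge_max g0 opprB gerBl f0.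
have hpfin := le_lt_trans (le_esumR hpos) ffin.
have hnfin := le_lt_trans (le_esumR hneg) gfin.
have : esumR (fun i => h^\+ i + g i) = esumR (fun i => h^\- i + f i).
  congr esumR; apply/funext => i.
  by have := congr1 (@^~ i) (funrposBneg h); rewrite !fctE /h; lra.
rewrite !esumRD // ?funrpos_ge0 ?funrneg_ge0 //.
rewrite (esumR_finE f0) // (esumR_finE g0) //.
rewrite (esumR_finE (@funrpos_ge0 _ _ h)) // (esumR_finE (@funrneg_ge0 _ _ h)) //.
by rewrite rsumE -!EFinD => -[]; lra.
Qed.

Lemma rsumD f g : abs_summable f -> abs_summable g ->
  rsum (fun i => f i + g i) = rsum f + rsum g.
Proof.
move=> fs gs.
have -> : (fun i => f i + g i) = (fun i => (f^\+ i + g^\+ i) - (f^\- i + g^\- i)).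
  by apply/funext => i; have := congr1 (@^~ i) (funrDB f g).
have fin_pos h : abs_summable h -> esumR (h^\+)%R \is a fin_num.
  by move=> hs; rewrite ge0_fin_numE ?esumR_ge0 ?abs_summable_pos // => i; apply: funrpos_ge0.
have fin_neg h : abs_summable h -> esumR (h^\-)%R \is a fin_num.
  by move=> hs; rewrite ge0_fin_numE ?esumR_ge0 ?abs_summable_neg // => i; apply: funrneg_ge0.
rewrite rsum_sub ?esumRD //; try by move=> i; rewrite addr_ge0 ?funrpos_ge0 ?funrneg_ge0.
- by rewrite !fineD ?fin_neg ?fin_pos // !rsumE; lra.
- by rewrite lte_add_pinfty ?abs_summable_pos.
- by rewrite lte_add_pinfty ?abs_summable_neg.
Qed.

Lemma fine_esumRZ A f : 0 <= A -> (forall i, 0 <= f i) ->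
  fine (esumR (fun i => A * f i)) = A * fine (esumR f).
Proof.
move=> A0 f0; rewrite esumRZ //; have := esumR_ge0 f0.
case: (esumR f) => [r| |] //= _; rewrite ?mulr0 //.
have [->|A0'] := eqVneq A 0; first by rewrite mul0e.
by rewrite gt0_muley // lte_fin lt_def A0' A0.
Qed.

Lemma rsumZ A f : rsum (fun i => A * f i) = A * rsum f.
Proof.
have [A0|A0] := leP 0 A.
  rewrite !rsumE (ge0_funrposM _ A0) (ge0_funrnegM _ A0).
  by rewrite !fine_esumRZ ?funrpos_ge0 ?funrneg_ge0 // mulrBr.
rewrite !rsumE (le0_funrposM _ (ltW A0)) (le0_funrnegM _ (ltW A0)).
by rewrite !fine_esumRZ ?oppr_ge0 ?funrpos_ge0 ?funrneg_ge0 ?(ltW A0) //; ring.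
Qed.

Lemma rsumN f : rsum (fun i => - f i) = - rsum f.
Proof. by rewrite !rsumE funrposN funrnegN opprB. Qed.

Lemma rsum_norm_le f : abs_summable f ->
  ((`|rsum f|)%:E <= esumR (fun i => `|f i|%R))%E.
Proof.
move=> fs; have -> : (fun i => `|f i|) = (fun i => f^\+ i + f^\- i).
  by apply/funext => i; have := congr1 (@^~ i) (funrposDneg f).
rewrite esumRD ?funrpos_ge0 ?funrneg_ge0 //.
rewrite (esumR_finE (@funrpos_ge0 _ _ f)) ?abs_summable_pos //.
rewrite (esumR_finE (@funrneg_ge0 _ _ f)) ?abs_summable_neg // -EFinD lee_fin rsumE.
have := fine_ge0 (esumR_ge0 (@funrpos_ge0 _ _ f)).
have := fine_ge0 (esumR_ge0 (@funrneg_ge0 _ _ f)).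
by move: (fine _) (fine _) => p n p0 n0; rewrite ler_norml; apply/andP; split; lra.
Qed.

Implicit Types (u v : I -> R[i]) (a : R[i]).

Definition csummable u := (esumR (fun i => cmod (u i)) < +oo)%E.

Lemma csummable_Re u : csummable u -> abs_summable (fun i => complex.Re (u i)).
Proof. by apply: le_lt_trans; apply: le_esumR => i; apply: normRe_le_cmod. Qed.

Lemma csummable_Im u : csummable u -> abs_summable (fun i => complex.Im (u i)).
Proof. by apply: le_lt_trans; apply: le_esumR => i; apply: normIm_le_cmod. Qed.

Lemma csummableZ a u : csummable u -> csummable (fun i => a * u i).
Proof.
move=> us; rewrite /csummable; under eq_fun do rewrite cmodM.
by rewrite esumRZ ?cmod_ge0 // (esumR_finE (fun i => cmod_ge0 (u i)) us) -EFinM ltry.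
Qed.

Lemma csummableJ u : csummable u -> csummable (fun i => conjc (u i)).
Proof. by apply: le_lt_trans; apply: le_esumR => i; rewrite cmodJ. Qed.

Lemma csumD u v : csummable u -> csummable v ->
  csum (fun i => u i + v i) = csum u + csum v.
Proof.
move=> us vs; rewrite /csum.
have -> : (fun i => complex.Re (u i + v i)) =
          (fun i => complex.Re (u i) + complex.Re (v i)).
  by apply/funext => i; case: (u i); case: (v i).
have -> : (fun i => complex.Im (u i + v i)) =
          (fun i => complex.Im (u i) + complex.Im (v i)).
  by apply/funext => i; case: (u i); case: (v i).
by rewrite !rsumD ?csummable_Re ?csummable_Im.
Qed.

Lemma csumZ a u : csummable u -> csum (fun i => a * u i) = a * csum u.
Proof.
move=> us; rewrite /csum.
have -> : (fun i => complex.Re (a * u i)) = (fun i =>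
    complex.Re a * complex.Re (u i) + - complex.Im a * complex.Im (u i)).
  by apply/funext => i; case: a; case: (u i) => /= *; ring.
have -> : (fun i => complex.Im (a * u i)) = (fun i =>
    complex.Re a * complex.Im (u i) + complex.Im a * complex.Re (u i)).
  by apply/funext => i; case: a; case: (u i) => /= *; ring.
rewrite !rsumD ?abs_summableZ ?csummable_Re ?csummable_Im // !rsumZ.
by case: a => p q /=; apply/eqP; rewrite eq_complex /=; apply/andP; split; apply/eqP; ring.
Qed.

Lemma csumJ u : csum (fun i => conjc (u i)) = conjc (csum u).
Proof.
rewrite /csum.
have -> : (fun i => complex.Re (conjc (u i))) = (fun i => complex.Re (u i)).
  by apply/funext => i; case: (u i).
have -> : (fun i => complex.Im (conjc (u i))) = (fun i => - complex.Im (u i)).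
  by apply/funext => i; case: (u i).
by rewrite rsumN.
Qed.

Lemma cmod_csum_le u : csummable u ->
  ((cmod (csum u))%:E <= esumR (fun i => cmod (u i)))%E.
Proof.
move=> us; have [w w1 wf] := polar_unit (csum u).
(* [w] rotates [csum u] onto the nonnegative reals *)
have -> : cmod (csum u) = rsum (fun i => complex.Re (w * u i)).
  by rewrite -[RHS]/(complex.Re (csum (fun i => w * u i))) csumZ // wf.
apply: (@le_trans _ _ (`|rsum (fun i => complex.Re (w * u i))|%:E)%E).
  by rewrite lee_fin ler_norm.
apply: le_trans (rsum_norm_le (csummable_Re (csummableZ w us))) _.
by apply: le_esumR => i; rewrite (le_trans (normRe_le_cmod _)) // cmodM w1 mul1r.
Qed.

End RealFamilies.

Lemma natSinv_lt_eventually (R : archiRealFieldType) (eps : R) : 0 < eps ->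
  exists M, forall n, (M <= n)%N -> n.+1%:R^-1 < eps.
Proof.
move=> eps0; exists (Num.truncn eps^-1) => n Mn.
rewrite invf_plt ?posrE ?ltr0n //; apply: lt_le_trans (truncnS_gt _) _.
by rewrite ler_nat.
Qed.

Section OrthonormalBasis.
Variables (R : realType) (H : lmodType R[i]) (ip : H -> H -> R[i]).
Hypothesis hH : is_hilbert ip.
Variables (I : choiceType) (e : I -> H).
Hypothesis he : orthonormal_basis ip e.
Local Notation hnorm := (hnorm ip).
Implicit Types (x y : H) (s t : seq I) (c : I -> R[i]).

Lemma ip_basis i j : ip (e i) (e j) = (i == j)%:R.
Proof.
have := he.1 i j; case: eqVneq => [->|nij] ->; first by rewrite asboolT.
by rewrite asboolF //; apply/eqP.
Qed.

Lemma hnorm_basis i : hnorm (e i) = 1.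
Proof. by apply: hnormE => //; rewrite ip_basis eqxx expr1n. Qed.

Lemma cmod_ip_basis_le x i : cmod (ip x (e i)) <= hnorm x.
Proof. by rewrite (le_trans (cmod_ip_le hH _ _)) // hnorm_basis mulr1. Qed.

Lemma ip_lincomb_basis s c k : uniq s ->
  ip (\sum_(i <- s) c i *: e i) (e k) = if k \in s then c k else 0.
Proof.
rewrite (ip_suml hH); elim: s => [|j s IH] /=; first by rewrite big_nil.
move=> /andP[js us]; rewrite big_cons IH // (ipZl hH) ip_basis in_cons eq_sym.
by case: eqVneq => [->|_]; rewrite ?(negPf js) ?mulr1 ?addr0 ?mulr0 ?add0r.
Qed.

Lemma hnorm_lincomb_basis s c : uniq s ->
  hnorm (\sum_(i <- s) c i *: e i) ^+ 2 = \sum_(i <- s) cmod (c i) ^+ 2.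
Proof.
move=> us; rewrite (hnorm_sqr hH) (ip_sumr hH) (raddf_sum (@complex.Re R)).
apply: eq_big_seq => j js.
by rewrite (ipZr hH) ip_lincomb_basis // js mulrC mulcJ.
Qed.

Definition fourier_sum s x := \sum_(i <- s) ip x (e i) *: e i.

Lemma ip_fourier_sum_basis s x k : uniq s -> k \in s ->
  ip (fourier_sum s x) (e k) = ip x (e k).
Proof. by move=> us ks; rewrite ip_lincomb_basis // ks. Qed.

Lemma fourier_sumK s t x : uniq s -> uniq t -> {subset s <= t} ->
  fourier_sum s (fourier_sum t x) = fourier_sum s x.
Proof.
by move=> us ut st; apply: eq_big_seq => i si; rewrite ip_fourier_sum_basis // st.
Qed.

Lemma hnorm_fourier_sum s x : uniq s ->
  hnorm (fourier_sum s x) ^+ 2 = \sum_(i <- s) cmod (ip x (e i)) ^+ 2.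
Proof. exact: hnorm_lincomb_basis. Qed.

Lemma hnorm_sub_fourier_sum s x : uniq s ->
  hnorm x ^+ 2 = hnorm (x - fourier_sum s x) ^+ 2 + \sum_(i <- s) cmod (ip x (e i)) ^+ 2.
Proof.
move=> us; rewrite -hnorm_fourier_sum // -(hnormD_orth hH) ?subrK //.
rewrite (ip_sumr hH) big_seq big1 // => j js.
by rewrite (ipZr hH) (ipBl hH) ip_fourier_sum_basis // subrr mulr0.
Qed.

Lemma bessel s x : uniq s -> \sum_(i <- s) cmod (ip x (e i)) ^+ 2 <= hnorm x ^+ 2.
Proof. by move=> us; rewrite (hnorm_sub_fourier_sum x us) lerDr sqr_ge0. Qed.

Lemma hnorm_fourier_sumB s t x : uniq s -> uniq t -> {subset s <= t} ->
  hnorm (fourier_sum t x - fourier_sum s x) ^+ 2 =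
  \sum_(i <- t) cmod (ip x (e i)) ^+ 2 - \sum_(i <- s) cmod (ip x (e i)) ^+ 2.
Proof.
move=> us ut st.
have -> : \sum_(i <- s) cmod (ip x (e i)) ^+ 2 =
          \sum_(i <- s) cmod (ip (fourier_sum t x) (e i)) ^+ 2.
  by apply: eq_big_seq => i si; rewrite ip_fourier_sum_basis // st.
rewrite -hnorm_fourier_sum // (hnorm_sub_fourier_sum (fourier_sum t x) us).
by rewrite fourier_sumK // addrK.
Qed.

Section Parseval.
Variables (x : H) (S : R) (F : nat -> seq I).
Hypothesis xS : esumR (fun i => cmod (ip x (e i)) ^+ 2) = S%:E.
Hypothesis uF : forall n, uniq (F n).
Hypothesis F_mono : forall n m, (n <= m)%N -> {subset F n <= F m}.
Hypothesis F_sum : forall n, S - n.+1%:R^-1 < \sum_(i <- F n) cmod (ip x (e i)) ^+ 2.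

Let sum_le_S s : uniq s -> \sum_(i <- s) cmod (ip x (e i)) ^+ 2 <= S.
Proof. by move=> us; rewrite (sum_le_esumR us) ?xS. Qed.

Lemma hnorm_fourier_sum_exhaustionB n m : (n <= m)%N ->
  hnorm (fourier_sum (F m) x - fourier_sum (F n) x) ^+ 2 <= n.+1%:R^-1.
Proof.
move=> nm; rewrite (hnorm_fourier_sumB x (uF n) (uF m) (F_mono nm)).
have := F_sum n; have := sum_le_S (uF m); move: (n.+1%:R^-1) => r; lra.
Qed.

Lemma cmod_ip_residual_basis n k :
  cmod (ip (x - fourier_sum (F n) x) (e k)) ^+ 2 <= n.+1%:R^-1.
Proof.
rewrite (ipBl hH) ip_lincomb_basis //; case: ifPn => [_|kF].
  by rewrite subrr cmodRE normr0 expr0n invr_ge0 ler0n.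
(* adding [k] to [F n] cannot push the partial sum above [S] *)
have := sum_le_S (s := k :: F n); rewrite /= kF uF big_cons => /(_ isT).
by have := F_sum n; rewrite subr0; move: (n.+1%:R^-1) => r; lra.
Qed.

Lemma fourier_sum_exhaustion_cvg : exists y, forall eps, 0 < eps ->
  exists M, forall n, (M <= n)%N -> hnorm (fourier_sum (F n) x - y) < eps.
Proof.
case: hH => _ _ _ _; apply => eps eps0.
have [M hM] := natSinv_lt_eventually (mulr_gt0 eps0 eps0).
have near p q : (M <= p)%N -> (p <= q)%N ->
    hnorm (fourier_sum (F q) x - fourier_sum (F p) x) < eps.
  move=> Mp pq; rewrite -(ltr_pXn2r (_ : 0 < 2)%N) ?nnegrE ?hnorm_ge0 ?ltW //.
  by rewrite (le_lt_trans (hnorm_fourier_sum_exhaustionB pq)) // expr2 hM.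
exists M => m n Mm Mn; have [nm|/ltnW mn] := leqP n m; first exact: near.
by rewrite (hnorm_distC hH) near.
Qed.

Lemma hnorm_residual_exhaustion eps : 0 < eps ->
  exists n, hnorm (x - fourier_sum (F n) x) < eps.
Proof.
have [y hy] := fourier_sum_exhaustion_cvg.
suff xy : x = y.
  by move=> /hy[M hM]; exists M; rewrite {1}xy (hnorm_distC hH) hM.
apply/eqP; rewrite -subr_eq0; apply/eqP; apply: he.2 => k.
apply: cmod_eq0; apply/eqP; rewrite eq_le cmod_ge0 andbT.
apply/ler_addgt0Pr => d d0; rewrite add0r.
have d2 : 0 < d / 2 by rewrite divr_gt0.
have [M hM] := hy _ d2; have [N hN] := natSinv_lt_eventually (mulr_gt0 d2 d2).
pose n := maxn M N; set u := fourier_sum (F n) x.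
have -> : x - y = (x - u) + (u - y) by rewrite addrA subrK.
rewrite (ipDl hH) (le_trans (cmodD _ _)) // [leRHS]splitr lerD //.
  apply: ler_of_sqr; first exact: ltW.
  by rewrite (le_trans (cmod_ip_residual_basis n k)) // expr2 ltW // hN ?leq_maxr.
by rewrite (le_trans (cmod_ip_basis_le _ k)) // ltW // hM ?leq_maxl.
Qed.

End Parseval.

Theorem parseval x : esumR (fun i => cmod (ip x (e i)) ^+ 2) = (hnorm x ^+ 2)%:E.
Proof.
have c0 i : 0 <= cmod (ip x (e i)) ^+ 2 by apply: sqr_ge0.
have x_le : (esumR (fun i => (cmod (ip x (e i)) ^+ 2)%R) <= (hnorm x ^+ 2)%:E)%E.
  by apply: esumR_le => s us; apply: bessel.
have xS := esumR_finE c0 (le_lt_trans x_le (ltry _)); set S := fine _ in xS.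
have [F [uF F_mono F_sum]] := esumR_exhaustion c0 xS.
rewrite xS; congr EFin; apply/eqP; rewrite eq_le -lee_fin -xS x_le /=.
apply/ler_addgt0Pr => eps eps0.
have [n hn] : exists n, hnorm (x - fourier_sum (F n) x) < Num.sqrt eps.
  by apply: (hnorm_residual_exhaustion xS uF F_mono F_sum); rewrite sqrtr_gt0.
rewrite (hnorm_sub_fourier_sum x (uF n)) addrC lerD ?(sum_le_esumR (uF n)) -?xS //.
by rewrite -(sqr_sqrtr (ltW eps0)) ltW // ltr_pXn2r ?nnegrE ?hnorm_ge0 ?sqrtr_ge0.
Qed.

End OrthonormalBasis.

Section HilbertSchmidt.
Variables (R : realType) (H : lmodType R[i]) (ip : H -> H -> R[i]).
Hypothesis hH : is_hilbert ip.
Variables (I : choiceType) (e : I -> H).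
Hypothesis he : orthonormal_basis ip e.
Local Notation hnorm := (hnorm ip).
Local Notation hs_norm := (hs_norm ip e).
Local Notation hs_sum2 := (hs_sum2 ip e).
Local Notation is_HS := (is_HS ip e).
Local Notation fourier_sum := (fourier_sum ip e).
Implicit Types (A B : H -> H) (x : H).

Lemma fourier_sum_approx x eps : 0 < eps ->
  exists2 s, uniq s & hnorm (x - fourier_sum s x) < eps.
Proof.
move=> eps0; have [s us hs] := esumR_gt_sum (parseval hH he x) (mulr_gt0 eps0 eps0).
exists s => //; rewrite -(ltr_pXn2r (_ : 0 < 2)%N) ?nnegrE ?hnorm_ge0 ?ltW //.
by move: hs; rewrite (hnorm_sub_fourier_sum hH he x us) expr2; lra.
Qed.

Lemma hs_norm_ge0 A : 0 <= hs_norm A.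
Proof. exact: sqrtr_ge0. Qed.

Lemma hs_sum2E A : is_HS A -> hs_sum2 A = (hs_norm A ^+ 2)%:E.
Proof.
move=> hA2; rewrite sqr_sqrtr ?fine_ge0 ?esumR_ge0 // ?fineK // => [|i].
  by rewrite ge0_fin_numE // esumR_ge0 // => i; apply: sqr_ge0.
exact: sqr_ge0.
Qed.

Lemma hs_sum2_le A : is_HS A -> (hs_sum2 A <= (hs_norm A ^+ 2)%:E)%E.
Proof. by move=> hA2; rewrite hs_sum2E. Qed.

Lemma sum_le_hs_norm A s : is_HS A -> uniq s ->
  \sum_(i <- s) hnorm (A (e i)) ^+ 2 <= hs_norm A ^+ 2.
Proof. by move=> hA2 us; rewrite (sum_le_esumR us) ?hs_sum2_le. Qed.

Lemma hs_norm_le A b : 0 <= b -> (hs_sum2 A <= (b ^+ 2)%:E)%E -> hs_norm A <= b.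
Proof.
move=> b0 hb; rewrite -(ger0_norm b0) -sqrtr_sqr ler_wsqrtr //.
have c0 i : 0 <= hnorm (A (e i)) ^+ 2 by apply: sqr_ge0.
have /esumR_finE sumE := le_lt_trans hb (ltry _).
by move: hb; rewrite [X in (X <= _)%E](sumE c0) lee_fin.
Qed.

Section BoundedLinear.
Variable A : H -> H.
Hypothesis hA : bounded_linear ip A.

Lemma blinear0 : A 0 = 0.
Proof.
have := hA.1 1 0 0; rewrite scaler0 addr0 scale1r.
by move=> /(congr1 (fun z => z - A 0)); rewrite subrr addrK => /esym.
Qed.

Lemma blinearD x y : A (x + y) = A x + A y.
Proof. by have := hA.1 1 x y; rewrite !scale1r. Qed.

Lemma blinearZ a x : A (a *: x) = a *: A x.
Proof. by rewrite -[a *: x]addr0 hA.1 blinear0 addr0. Qed.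

Lemma blinear_sum (J : Type) (r : seq J) (f : J -> H) :
  A (\sum_(j <- r) f j) = \sum_(j <- r) A (f j).
Proof. exact: (big_morph A blinearD blinear0). Qed.

Hypothesis hA2 : is_HS A.

Lemma hnorm_apply_fourier_sum_le s x : uniq s ->
  hnorm (A (fourier_sum s x)) <= hs_norm A * hnorm x.
Proof.
move=> us; rewrite blinear_sum; apply: le_trans (hnorm_sum hH _ _) _.
under eq_bigr do rewrite blinearZ (hnormZ hH).
apply: le_trans (sum_mul_le_sqrt _ _ _) _; rewrite mulrC ler_pM ?sqrtr_ge0 //.
  by rewrite -(ger0_norm (hs_norm_ge0 A)) -sqrtr_sqr ler_wsqrtr // sum_le_hs_norm.
by rewrite -(ger0_norm (hnorm_ge0 ip x)) -sqrtr_sqr ler_wsqrtr // bessel.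
Qed.

Lemma hnorm_apply_le x : hnorm (A x) <= hs_norm A * hnorm x.
Proof.
have [M hM] := hA.2; apply/ler_addgt0Pr => eps eps0.
have M1 : 0 < `|M| + 1 by rewrite ltr_wpDl.
have [s us hs] := fourier_sum_approx x (divr_gt0 eps0 M1).
have -> : A x = A (fourier_sum s x) + A (x - fourier_sum s x).
  by rewrite -blinearD addrC subrK.
apply: le_trans (ler_hnormD hH _ _) _; rewrite lerD ?hnorm_apply_fourier_sum_le //.
apply: le_trans (hM _) _; rewrite ltr_pdivlMr // in hs.
have := hnorm_ge0 ip (x - fourier_sum s x); have := normr_ge0 M; have := ler_norm M.
by move: (hnorm _) hs => r *; nra.
Qed.

End BoundedLinear.

Lemma hs_sum2_comp_le A B : bounded_linear ip A -> is_HS A -> is_HS B ->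
  (hs_sum2 (fun x => A (B x)) <= ((hs_norm A * hs_norm B) ^+ 2)%:E)%E.
Proof.
move=> hA hA2 hB2; apply: esumR_le => s us.
apply: le_trans (_ : \sum_(i <- s) hs_norm A ^+ 2 * hnorm (B (e i)) ^+ 2 <= _).
  apply: ler_sum => i _; rewrite -exprMn lerXn2r ?nnegrE ?mulr_ge0 ?hnorm_ge0 //.
    exact: hs_norm_ge0.
  exact: hnorm_apply_le.
by rewrite -mulr_sumr exprMn ler_wpM2l ?sqr_ge0 // sum_le_hs_norm.
Qed.

Lemma is_HS_comp A B : bounded_linear ip A -> is_HS A -> is_HS B ->
  is_HS (fun x => A (B x)).
Proof.
by move=> hA hA2 hB2; rewrite /is_HS (le_lt_trans (hs_sum2_comp_le hA hA2 hB2)) ?ltry.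
Qed.

Lemma hs_norm_comp_le A B : bounded_linear ip A -> is_HS A -> is_HS B ->
  hs_norm (fun x => A (B x)) <= hs_norm A * hs_norm B.
Proof.
by move=> hA hA2 hB2; rewrite hs_norm_le ?mulr_ge0 ?hs_norm_ge0 ?hs_sum2_comp_le.
Qed.

Lemma hs_normD_le A B : is_HS A -> is_HS B ->
  hs_norm (fun x => A x + B x) <= hs_norm A + hs_norm B.
Proof.
move=> hA2 hB2; apply: hs_norm_le; first by rewrite addr_ge0 ?hs_norm_ge0.
have := esumR_sqrD_le (hs_sum2_le hA2) (hs_sum2_le hB2).
rewrite !sqrtr_sqr !ger0_norm ?hs_norm_ge0 //; apply: le_trans; apply: le_esumR => i.
by rewrite lerXn2r ?nnegrE ?addr_ge0 ?hnorm_ge0 // ler_hnormD.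
Qed.

Lemma hs_sum2_adjoint A As : adjoint_of ip A As -> hs_sum2 As = hs_sum2 A.
Proof.
(* both sides are the double sum of |<A e_j, e_i>|^2, in the two orders *)
move=> hadj.
transitivity (\esum_(i in [set: I]) \esum_(j in [set: I])
                (cmod (ip (A (e j)) (e i)) ^+ 2)%:E)%E.
  apply: eq_esum => i _; rewrite -(parseval hH he); apply: eq_esum => j _.
  by rewrite (ipC hH) -hadj cmodJ.
rewrite esum_swap => [|i j]; last by rewrite lee_fin sqr_ge0.
by apply: eq_esum => j _; apply: (parseval hH he).
Qed.

Lemma is_HS_adjoint A As : adjoint_of ip A As -> is_HS A -> is_HS As.
Proof. by move=> hadj; rewrite /is_HS (hs_sum2_adjoint hadj). Qed.

Lemma hs_norm_adjoint A As : adjoint_of ip A As -> hs_norm As = hs_norm A.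
Proof. by move=> hadj; rewrite /Defs.hs_norm (hs_sum2_adjoint hadj). Qed.

Lemma esum_cmod_trace_le A B Bs : adjoint_of ip B Bs -> is_HS A -> is_HS Bs ->
  (esumR (fun i => cmod (ip (B (A (e i))) (e i))) <= (hs_norm A * hs_norm Bs)%:E)%E.
Proof.
move=> hadj hA2 hBs2.
have := esumR_mul_le (fun i => hnorm_ge0 ip (A (e i))) (fun i => hnorm_ge0 ip (Bs (e i)))
  (hs_sum2_le hA2) (hs_sum2_le hBs2).
rewrite !sqrtr_sqr !ger0_norm ?hs_norm_ge0 //; apply: le_trans; apply: le_esumR => i.
by rewrite hadj cmod_ip_le.
Qed.

Lemma trace_csummable A B Bs : adjoint_of ip B Bs -> is_HS A -> is_HS Bs ->
  csummable (fun i => ip (B (A (e i))) (e i)).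
Proof.
move=> hadj hA2 hBs2.
by rewrite /csummable (le_lt_trans (esum_cmod_trace_le hadj hA2 hBs2)) ?ltry.
Qed.

Lemma cmod_trace_le A B Bs : adjoint_of ip B Bs -> is_HS A -> is_HS Bs ->
  cmod (trace ip e (fun x => B (A x))) <= hs_norm A * hs_norm Bs.
Proof.
move=> hadj hA2 hBs2; rewrite -lee_fin.
apply: le_trans (cmod_csum_le (trace_csummable hadj hA2 hBs2)) _.
exact: esum_cmod_trace_le.
Qed.

End HilbertSchmidt.

Section Corollary.
Variables (R : realType) (H : lmodType R[i]) (ip : H -> H -> R[i]).
Hypothesis hH : is_hilbert ip.
Variables (I : choiceType) (e : I -> H).
Hypothesis he : orthonormal_basis ip e.
Local Notation hs_norm := (hs_norm ip e).
Local Notation trace := (trace ip e).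
Variables T Ts S : H -> H.
Hypotheses (hT : bounded_linear ip T) (hTs : bounded_linear ip Ts).
Hypotheses (hadj : adjoint_of ip T Ts) (hS : bounded_linear ip S).
Hypotheses (hT2 : is_HS ip e T) (hS2 : is_HS ip e S).

Let hTs2 : is_HS ip e Ts := is_HS_adjoint hH he hadj hT2.
Let hs_norm_Ts : hs_norm Ts = hs_norm T := hs_norm_adjoint hH he hadj.

Lemma hs_norm_TTs_add_TsT_le :
  hs_norm (fun x => T (Ts x) + Ts (T x)) <= 2 * hs_norm T ^+ 2.
Proof.
have hTTs := hs_norm_comp_le hH he hT hT2 hTs2.
have hTsT := hs_norm_comp_le hH he hTs hTs2 hT2.
have := hs_normD_le hH (is_HS_comp hH he hT hT2 hTs2) (is_HS_comp hH he hTs hTs2 hT2).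
move/le_trans; apply; rewrite hs_norm_Ts in hTTs hTsT.
by rewrite (le_trans (lerD hTTs hTsT)) // -expr2 mulr_natl mulr2n.
Qed.

Lemma trace_rotated_sq phi :
  trace (fun x => expi phi *: T (expi phi *: T x) + expi (- phi) *: Ts (expi (- phi) *: Ts x))
  = expi phi ^+ 2 * trace (fun x => T (T x)) + conjc (expi phi ^+ 2 * trace (fun x => T (T x))).
Proof.
have tT := trace_csummable hH hadj hT2 hTs2.
rewrite expiN -csumZ // -csumJ -csumD ?csummableJ ?csummableZ //.
congr csum; apply/funext => i.
rewrite (ipDl hH) !(blinearZ hT) !(blinearZ hTs) !(ipZl hH) !mulrA.
rewrite (ipC hH (e i) (Ts (Ts (e i)))) -!hadj.
by rewrite expr2 !rmorphM.
Qed.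

Lemma cmod_trace_rotated_sq_le phi :
  cmod (trace (fun x => expi phi *: T (expi phi *: T x)
                        + expi (- phi) *: Ts (expi (- phi) *: Ts x)))
  <= 2 * cmod (trace (fun x => T (T x))).
Proof.
rewrite trace_rotated_sq (le_trans (cmod_addcJ_le _)) //.
by rewrite cmodM expr2 cmodM cmod_expi !mul1r.
Qed.

Lemma hs_norm_TS_sqr_le :
  hs_norm (fun x => T (S x)) ^+ 2 <= hs_norm T ^+ 2 * hs_norm S ^+ 2.
Proof.
rewrite -exprMn lerXn2r ?nnegrE ?mulr_ge0 ?hs_norm_ge0 //.
exact: hs_norm_comp_le.
Qed.

Lemma cmod_trace_TSTS_le :
  cmod (trace (fun x => T (S (T (S x))))) <= hs_norm T ^+ 2 * hs_norm S ^+ 2.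
Proof.
have hTS2 := is_HS_comp hH he hT hT2 hS2.
have hSTS := hs_norm_comp_le hH he hS hS2 hTS2.
have hTS := hs_norm_comp_le hH he hT hT2 hS2.
apply: le_trans (cmod_trace_le hH hadj (is_HS_comp hH he hS hS2 hTS2) hTs2) _.
rewrite hs_norm_Ts; apply: le_trans (ler_wpM2r (hs_norm_ge0 ip e T) hSTS) _.
apply: le_trans (ler_wpM2r (hs_norm_ge0 ip e T) (ler_wpM2l (hs_norm_ge0 ip e S) hTS)) _.
by rewrite [leRHS](_ : _ = hs_norm S * (hs_norm T * hs_norm S) * hs_norm T) //; ring.
Qed.

End Corollary.

Theorem corollary3p7 (R : realType) (H : lmodType R[i]) (ip : H -> H -> R[i])
  (hH : is_hilbert ip)
  (I : choiceType) (e : I -> H) (he : orthonormal_basis ip e)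
  (T Ts S : H -> H)
  (hT : bounded_linear ip T) (hTs : bounded_linear ip Ts) (hadj : adjoint_of ip T Ts)
  (hS : bounded_linear ip S)
  (hT2 : is_HS ip e T) (hS2 : is_HS ip e S) :
  (hs_norm ip e (fun x => T (Ts x) + Ts (T x))
     + sup [set cmod (trace ip e (fun x =>
                 expi phi *: T (expi phi *: T x)
                 + expi (- phi) *: Ts (expi (- phi) *: Ts x)))
           | phi in [set: R]]
   <= 2 * (hs_norm ip e T ^+ 2 + cmod (trace ip e (fun x => T (T x)))))
  /\
  (hs_norm ip e (fun x => T (S x)) ^+ 2
     + cmod (trace ip e (fun x => T (S (T (S x)))))
   <= 4 * Num.min
            (hs_norm ip e T ^+ 2 * (hs_norm ip e S ^+ 2 + cmod (trace ip e (fun x => S (S x)))))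
            (hs_norm ip e S ^+ 2 * (hs_norm ip e T ^+ 2 + cmod (trace ip e (fun x => T (T x)))))).
Proof.
split.
  rewrite mulrDr lerD ?(hs_norm_TTs_add_TsT_le hH he hT hTs hadj hT2) //.
  apply: ge_sup; first by eexists; exists 0.
  by move=> _ [phi _ <-]; apply: (cmod_trace_rotated_sq_le hH he hT hTs hadj hT2).
have hTS := hs_norm_TS_sqr_le hH he hT hT2 hS2.
have htr := cmod_trace_TSTS_le hH he hT hadj hS hT2 hS2.
have TS_le_min : hs_norm ip e T ^+ 2 * hs_norm ip e S ^+ 2 <= Num.min
    (hs_norm ip e T ^+ 2 * (hs_norm ip e S ^+ 2 + cmod (trace ip e (fun x => S (S x)))))
    (hs_norm ip e S ^+ 2 * (hs_norm ip e T ^+ 2 + cmod (trace ip e (fun x => T (T x))))).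
  rewrite le_min; apply/andP; split; first by rewrite ler_wpM2l ?sqr_ge0 ?lerDl ?cmod_ge0.
  by rewrite mulrC ler_wpM2l ?sqr_ge0 ?lerDl ?cmod_ge0.
have := mulr_ge0 (sqr_ge0 (hs_norm ip e T)) (sqr_ge0 (hs_norm ip e S)).
by move: (Num.min _ _) (_ * _) hTS htr TS_le_min => m p *; lra.
Qed.
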